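(* Let $n$ be a positive integer, $0\le m\le\lfloor n/2\rfloor$ and $0\le k\le m$. Let $M^{(n-m,m)}$ be the complex vector space with basis $\{e_\sigma\}$ indexed by the $m$-element subsets $\sigma$ of $\{1,\dots,n\}$, let $b_0,\dots,b_m$ be complex numbers and let $B_{(n-m,m)}$ be the matrix (in the basis $\{e_\sigma\}$) whose $(\sigma,\tau)$ entry is $b_{\#(\sigma\cap\tau)}$. Let $\Omega=\{n-m+1,\dots,n\}$ and define the linear map $\pi:\mathbb{C}[S_n]\to M^{(n-m,m)}$ by $\pi(g)=e_{g(\Omega)}$ for $g\in S_n$. Let $T_k$ be the Young tableau of shape $(n-k,k)$ whose first row contains $1,\dots,n-k$ and whose second row contains $n-k+1,\dots,n$, with row subgroup $R(T_k)$ and column subgroup $C(T_k)$, and let $c_k=\big(\sum_{q\in C(T_k)}\operatorname{sgn}(q)q\big)\big(\sum_{p\in R(T_k)}p\big)\in\mathbb{C}[S_n]$. Then the coefficient of $e_\Omega$ in $B_{(n-m,m)}\pi(c_k)$ is $$\sum_{v=0}^{k}\sum_{w=0}^{m-k}(-1)^v\binom{k}{v}\binom{m-k}{w}\binom{n-m-v}{w}w!\binom{m-k+v}{m-k-w}(m-k-w)!\,k!\,(n-m)!\;b_{m-v-w}.$$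
   Context: $\#X$ denotes the cardinality of a finite set $X$. The row subgroup $R(T_k)$ (resp. column subgroup $C(T_k)$) consists of the permutations of $\{1,\dots,n\}$ preserving each row (resp. each column) of $T_k$ as a set. Products in the group ring are composition of permutations, $qp=q\circ p$. *)

From HB Require Import structures.
From mathcomp Require Import all_boot all_order all_algebra all_fingroup all_field.
Unset Printing Implicit Defensive.
Import GRing.Theory Num.Theory.
Local Open Scope ring_scope.

(* Conventions: {1,...,n} is represented by 'I_n = {0,...,n-1} (value i+1 <-> i).  Permutations: {perm 'I_n}; NOTE mathcomp's product
   (p * q)%g is "p first, then q", i.e. (p * q)%g x = q (p x), so the paper's
   q o p is (p * q)%g. *)

Definition Omega (n m : nat) : {set 'I_n} := [set i : 'I_n | n - m <= i]%N.

Definition rowT (n k : nat) (i : 'I_n) : nat := ((n - k <= i)%N : nat).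
(* column index: entry n-k+j (second row) sits in column j, entry j of row 1 in column j *)
Definition colT (n k : nat) (i : 'I_n) : nat := if (n - k <= i)%N then (i - (n - k))%N else i.

Definition rowgroup (n k : nat) : {set {perm 'I_n}} :=
  [set p : {perm 'I_n} | [forall i, rowT n k (p i) == rowT n k i]].
Definition colgroup (n k : nat) : {set {perm 'I_n}} :=
  [set q : {perm 'I_n} | [forall i, colT n k (q i) == colT n k i]].

(* Elements of C[S_n] as coefficient functions {perm 'I_n} -> algC. *)
Definition groupring (n : nat) := {perm 'I_n} -> algC.

(* c_k = (sum_{q in C} sgn(q) q) (sum_{p in R} p), product = composition q o p *)
Definition young_c (n k : nat) : groupring n := fun g =>
  \sum_(q in colgroup n k) \sum_(p in rowgroup n k)
     ((-1) ^+ odd_perm q) * ((g == (p * q)%g)%:R).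

(* M^(n-m,m): vectors are coefficient functions on subsets (only m-subsets used). *)
Definition Mvec (n : nat) := {set 'I_n} -> algC.

Definition piM (n m : nat) (a : groupring n) : Mvec n := fun sigma =>
  \sum_(g : {perm 'I_n}) a g * ((g @: Omega n m == sigma)%:R).

Definition Bmat (n m : nat) (b : nat -> algC) (v : Mvec n) : Mvec n := fun sigma =>
  \sum_(tau : {set 'I_n} | #|tau| == m) b #|sigma :&: tau| * v tau.

(* The coefficient of e_Omega in B pi(c_k) is the sum over q in C(T_k) and p in R(T_k)
   of sgn(q) b_{#(Omega :&: qp(Omega))}.  As p runs over the row group, p(Omega) runs
   over the m-sets containing the second row S, each of them reached (n-m)! (m-k)! k!
   times (the order of the stabiliser of Omega), so the p-sum becomes a sum over the
   (m-k)-subsets X of the first row.  The column group consists of the products of the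
   disjoint transpositions (j, j+n-k), j in J, over the subsets J of the first k
   columns, with sign (-1)^#J.  For such a q, #(Omega :&: q(S :|: X)) = k - #J +
   #(X :&: W) with #W = m - k + #J, and the X meeting W in t points are counted by a
   product of two binomials.  Grouping the J by size and substituting t = m - k - w
   gives the formula. *)

From HB Require Import structures.
From mathcomp Require Import all_boot all_order all_algebra all_fingroup all_field.
From mathcomp Require Import zify ring.
Import GRing.Theory Num.Theory.

Set Implicit Arguments.
Unset Strict Implicit.
Unset Printing Implicit Defensive.

Section YoungSubgroup.

Variables (T : finType) (lab : T -> nat).

Definition young_subgroup : {set {perm T}} :=
  [set p : {perm T} | [forall x, lab (p x) == lab x]].

Lemma young_subgroupP (p : {perm T}) :
  reflect (forall x, lab (p x) = lab x) (p \in young_subgroup).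
Proof. by rewrite inE; apply: (iffP forallP) => h x; apply/eqP. Qed.

Lemma group_set_young_subgroup : group_set young_subgroup.
Proof.
apply/group_setP; split=> [|p q /young_subgroupP hp /young_subgroupP hq].
  by apply/young_subgroupP => x; rewrite perm1.
by apply/young_subgroupP => x; rewrite permM hq hp.
Qed.

Canonical young_subgroup_group := Group group_set_young_subgroup.

Let fiber l := [set x | lab x == l].

(* [young_below N] is the direct product of the symmetric groups of the fibres of
   the labels below [N]. *)
Let young_below N :=
  (young_subgroup_group :&: 'C([set x | N <= lab x] | 'P))%G.

Let young_belowP N (p : {perm T}) : reflect
  ((forall x, lab (p x) = lab x) /\ (forall x, N <= lab x -> p x = x))
  (p \in young_below N).
Proof.
rewrite inE; apply: (iffP andP) => [[/young_subgroupP hl /astabP hf]|[hl hf]].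
  by split=> // x hx; apply: hf; rewrite inE.
by split; [apply/young_subgroupP | apply/astabP => x; rewrite inE => /hf].
Qed.

Let young_belowS N :
  young_below N.+1 = (young_below N * Sym (fiber N))%g :> {set _}.
Proof.
apply/eqP; rewrite eqEsubset mul_subG ?andbT.
- apply/subsetP => p /young_belowP[hl hf].
  have nFp : p \in ('N(fiber N | 'P))%g by apply/astabsP => x; rewrite /= !inE hl.
  set s := restr_perm (fiber N) p.
  have sF : perm_on (fiber N) s^-1%g := perm_onV (restr_perm_on _ p).
  have ps x : (p * s^-1)%g x = if lab x == N then x else p x.
    rewrite permM; case: ifP => xN.
      by rewrite -(restr_permE nFp) ?inE // permK.
    by rewrite (out_perm sF) // inE hl xN.
  rewrite -(mulgVK s p); apply: mem_mulg; last by rewrite inE restr_perm_on.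
  apply/young_belowP; split=> x; rewrite ps; case: ifP => // /negbT xN.
  by move=> Nx; apply: hf; rewrite ltn_neqAle eq_sym xN.
- apply/subsetP => p /young_belowP[hl hf]; apply/young_belowP.
  by split=> // x /ltnW /hf.
- apply/subsetP => s; rewrite inE => sF; apply/young_belowP; split=> x.
    have [xN | xN] := eqVneq (lab x) N.
      by have := perm_closed x sF; rewrite !inE xN eqxx => /eqP.
    by rewrite (out_perm sF) ?inE.
  by move=> Nx; rewrite (out_perm sF) // inE neq_ltn Nx orbT.
Qed.

Let young_below_TI N : (young_below N :&: Sym (fiber N) = 1)%g.
Proof.
apply/trivgP/subsetP => p /setIP[/young_belowP[_ hf]]; rewrite inE => sF.
rewrite inE; apply/eqP/permP => x; rewrite perm1.
have [|xN] := boolP (x \in fiber N); last exact: out_perm sF xN.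
by rewrite inE => /eqP xN; rewrite hf // xN.
Qed.

Let card_young_below N : #|young_below N| = \prod_(l < N) #|fiber l|`!.
Proof.
elim: N => [|N IHN].
  rewrite big_ord0; apply/eqP/cards1P; exists 1%g; apply/setP => p.
  rewrite in_set1; apply/idP/eqP => [/young_belowP[_ hf]|->]; last exact: group1.
  by apply/permP => x; rewrite perm1 hf.
by rewrite young_belowS TI_cardMg ?young_below_TI // IHN card_Sym big_ord_recr.
Qed.

Lemma card_young_subgroup N : (forall x, lab x < N) ->
  #|young_subgroup| = \prod_(l < N) #|[set x | lab x == l]|`!.
Proof.
move=> labN; rewrite -card_young_below; apply: eq_card => p.
apply/idP/young_belowP => [/young_subgroupP hl|[hl _]]; last exact/young_subgroupP.
by split=> // x; rewrite leqNgt labN.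
Qed.

End YoungSubgroup.

Lemma young_subgroup_stab (T : finType) (lab : T -> nat) (A : {set T}) :
  ('C_(young_subgroup lab)[A | 'P^*])%g =
  young_subgroup (fun x => (x \in A) + (lab x).*2).
Proof.
apply/setP => p; rewrite astab1_set in_setI; apply/andP/young_subgroupP.
  by case=> /young_subgroupP hl /astabsP hA x; rewrite /= hA hl.
move=> h; have hA x : (p x \in A) = (x \in A).
  by have /(congr1 odd) := h x; rewrite !oddD !odd_double !addbF !oddb.
split; last by apply/astabsP => x; rewrite /= hA.
by apply/young_subgroupP => x; have /(congr1 half) := h x; rewrite !half_bit_double.
Qed.

Lemma sum_orbit (aT : finGroupType) (D : {group aT}) (rT : finType)
    (to : action D rT) (G : {group aT}) (x : rT) (V : nmodType) (F : rT -> V) :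
  G \subset D ->
  (\sum_(a in G) F (to x a) =
     (\sum_(y in orbit to G x) F y) *+ #|('C_G[x | to])%g|)%R.
Proof.
move=> sGD; rewrite (partition_big (to x) (mem (orbit to G x))) /=; last first.
  by move=> a Ga; apply: mem_orbit.
rewrite -sumrMnl; apply: eq_bigr => _ /orbitP[b Gb <-].
rewrite (eq_bigr (fun _ => F (to x b))); last by move=> a /andP[_ /eqP ->].
rewrite (eq_bigl (mem (amove to G x (to x b)))) ?sumr_const; last by move=> a; rewrite !inE.
by rewrite amove_act // card_rcoset.
Qed.

Lemma card_ord_itv n a c : a <= c <= n -> #|[set i : 'I_n | a <= i < c]| = c - a.
Proof.
case/andP=> ac cn.
rewrite cardsE cardE /enum_mem size_filter -(count_map val (fun i => a <= i < c)).
rewrite -enumT val_enum_ord.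
have -> : n = a + (c - a) + (n - c) by lia.
rewrite !iotaD !count_cat add0n (@eq_in_count _ _ pred0 (iota 0 a)); last first.
  by move=> i; rewrite mem_iota /=; lia.
rewrite (@eq_in_count _ _ predT (iota a _)); last by move=> i; rewrite mem_iota /=; lia.
rewrite (@eq_in_count _ _ pred0 (iota (a + (c - a)) _)); last first.
  by move=> i; rewrite mem_iota /=; lia.
by rewrite !count_pred0 count_predT size_iota addn0.
Qed.

Lemma card_ord_geq n a : a <= n -> #|[set i : 'I_n | a <= i]| = n - a.
Proof.
move=> an; rewrite -(card_ord_itv (n := n)) ?an ?leqnn //; apply: eq_card => i.
by rewrite !inE ltn_ord andbT.
Qed.

Lemma cardsU_disjoint (T : finType) (A B : {set T}) :
  [disjoint A & B] -> #|A :|: B| = #|A| + #|B|.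
Proof. by move=> /disjoint_setI0 AB0; rewrite -cardsUI AB0 cards0 addn0. Qed.

Lemma sum_supsets (T : finType) (S : {set T}) m (V : nmodType) (G : {set T} -> V) :
  #|S| <= m ->
  (\sum_(Y : {set T} | (S \subset Y) && (#|Y| == m)) G Y =
   \sum_(X : {set T} | (X \subset ~: S) && (#|X| == (m - #|S|)%N)) G (S :|: X))%R.
Proof.
move=> Sm; rewrite (reindex_onto (setU S) (fun Y => Y :\: S)) /=; last first.
  by move=> Y /andP[/setUidPr SY _]; rewrite setDE setUIr setUCr setIT.
apply: eq_bigl => X; rewrite subsetUl setDUl setDv set0U -disjoints_subset.
have [XS|] := boolP [disjoint X & S]; last first.
  by move=> XS; rewrite andbC; case: eqP => // /setDidPl; rewrite (negbTE XS).
rewrite (setDidPl XS) eqxx andbT cardsU_disjoint 1?disjoint_sym //.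
by apply/eqP/eqP; lia.
Qed.

Section SplitDraws.

Variables (T : finType) (U W : {set T}).
Hypothesis sWU : W \subset U.

Let split_setU (P Q : {set T}) : P \subset W -> [disjoint Q & W] ->
  (P :|: Q) :&: W = P /\ (P :|: Q) :\: W = Q.
Proof.
move=> sPW dQW; split.
  by rewrite setIUl (setIidPl sPW) (disjoint_setI0 dQW) setU0.
by rewrite setDUl (setDidPl dQW) (_ : P :\: W = set0) ?set0U //; apply/eqP; rewrite setD_eq0.
Qed.

Lemma card_draws_setI s t : t <= s ->
  #|[set X : {set T} | (X \subset U) && (#|X| == s) & #|X :&: W| == t]| =
  'C(#|W|, t) * 'C(#|U| - #|W|, s - t).
Proof.
move=> ts; pose D1 := [set P : {set T} | P \subset W & #|P| == t].
pose D2 := [set Q : {set T} | Q \subset U :\: W & #|Q| == s - t].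
have -> : [set X : {set T} | (X \subset U) && (#|X| == s) & #|X :&: W| == t] =
    (fun PQ => PQ.1 :|: PQ.2) @: setX D1 D2.
  apply/setP => X; rewrite inE; apply/idP/imsetP => [/andP[/andP[sXU /eqP cX] /eqP cXW]|].
    exists (X :&: W, X :\: W); last by rewrite setID.
    by rewrite !inE subsetIr setSD // cardsD cX cXW !eqxx.
  case=> -[P Q] /setXP[] /[!inE] /andP[sPW /eqP cP] /andP[] /[!subsetD].
  case/andP=> sQU dQW /eqP cQ ->; have [-> _] := split_setU sPW dQW.
  rewrite subUset sQU (subset_trans sPW sWU) cP cardsU_disjoint ?cP ?cQ ?subnKC ?eqxx //.
  by apply: disjointWl sPW _; rewrite disjoint_sym.
rewrite card_in_imset ?cardsX ?cards_draws ?cardsD ?(setIidPr sWU) //.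
move=> [P Q] [P' Q']; rewrite !inE !subsetD /=.
move=> /and3P[/andP[sPW _] /andP[_ dQW] _] /and3P[/andP[sPW' _] /andP[_ dQW'] _] e.
have [eP eQ] := split_setU sPW dQW; have [eP' eQ'] := split_setU sPW' dQW'.
by congr pair; [rewrite -eP e eP' | rewrite -eQ e eQ'].
Qed.

End SplitDraws.

Lemma sum_by_value (I : finType) (D : pred I) (f : I -> nat) N (V : nmodType)
    (G : nat -> V) :
  (forall i, D i -> f i < N) ->
  (\sum_(i | D i) G (f i) = \sum_(t < N) G t *+ #|[set i | D i & f i == t]|)%R.
Proof.
move=> fN; have Gf i : D i -> G (f i) = (\sum_(t < N) G t *+ (f i == t))%R.
  move=> Di; rewrite (bigD1 (Ordinal (fN i Di))) //= eqxx big1 ?addr0 // => t.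
  by rewrite eq_sym -val_eqE => /negbTE ->.
rewrite (eq_bigr _ Gf) exchange_big /=; apply: eq_bigr => t _.
rewrite sumrMnr -sum1dep_card; congr (_ *+ _)%R.
by rewrite big_mkcond [in RHS]big_mkcond; apply: eq_bigr => i _; case: (D i).
Qed.

Lemma setact_perm (T : finType) (A : {set T}) (p : {perm T}) :
  ('P^*)%act A p = p @: A.
Proof. by []. Qed.

Lemma card_setI_imset_perm (T : finType) (q : {perm T}) (A S X : {set T}) :
  [disjoint X & S] ->
  #|A :&: q @: (S :|: X)| =
  #|A| - #|(q^-1)%g @: A :\: S| + #|X :&: ((q^-1)%g @: A :\: S)|.
Proof.
move=> dXS; set A' := (q^-1)%g @: A.
have -> : #|A :&: q @: (S :|: X)| = #|A' :&: (S :|: X)|.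
  rewrite -(card_imset _ (@perm_inj _ q^-1)) imsetI; last exact: in2W perm_inj.
  by rewrite -imset_comp (eq_imset _ (permK q)) imset_id.
have cA' : #|A'| = #|A| by rewrite card_imset //; apply: perm_inj.
rewrite setIUr cardsU_disjoint; last first.
  by apply: disjointWl (subsetIr _ _) _; apply: disjointWr (subsetIr _ _) _; rewrite disjoint_sym.
have -> : X :&: (A' :\: S) = A' :&: X.
  have sXS : X \subset ~: S by rewrite -disjoints_subset.
  by rewrite setDE setICA (setIidPl sXS).
have := cardsD A' S; have := subset_leq_card (subsetIl A' S); lia.
Qed.

Lemma imset_permM (T : finType) (p q : {perm T}) (A : {set T}) :
  (p * q)%g @: A = q @: (p @: A).
Proof. by rewrite -imset_comp; apply: eq_imset => x; rewrite permM. Qed.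

Canonical rowgroup_group n k :=
  Group (group_set_young_subgroup (rowT n k) : group_set (rowgroup n k)).

Lemma card_Omega n m : m <= n -> #|Omega n m| = m.
Proof. by move=> le_mn; rewrite card_ord_geq ?leq_subr // subKn. Qed.

Lemma card_fiber_ord_itv n (lab : 'I_n -> nat) l a c : a <= c <= n ->
  (forall x : 'I_n, (lab x == l) = (a <= x < c)) -> #|[set x | lab x == l]| = c - a.
Proof.
move=> acn labE; rewrite -(card_ord_itv acn).
by apply: eq_card => x; rewrite !inE labE.
Qed.

Section SecondRow.

Variables n k : nat.
Hypothesis le_kn : k <= n.

Definition second_row : {set 'I_n} := [set i : 'I_n | n - k <= i].

Lemma card_second_row : #|second_row| = k.
Proof. by rewrite card_ord_geq ?leq_subr // subKn. Qed.

Lemma card_compl_second_row : #|~: second_row| = n - k.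
Proof. by have := cardsC second_row; rewrite card_second_row card_ord; lia. Qed.

Lemma card_rowgroup : #|rowgroup n k| = ((n - k)`! * k`!)%N.
Proof.
rewrite (card_young_subgroup (N := 2)); last by move=> x; rewrite /rowT; case: (n - k <= x).
rewrite !big_ord_recr big_ord0 /= mul1n (@card_fiber_ord_itv _ _ 0 0 (n - k))
  ?(@card_fiber_ord_itv _ _ 1 (n - k) n) ?subn0 ?subKn //; try lia.
all: move=> x; have := ltn_ord x; rewrite /rowT.
all: by case: (leqP (n - k) x) => /= h xn; apply/idP/idP; lia.
Qed.

End SecondRow.

Section RowOrbit.

Variables n m k : nat.
Hypotheses (le_km : k <= m) (le_mn : m <= n).
Let le_kn := leq_trans le_km le_mn.

Lemma card_rowgroup_stab :
  #|('C_(rowgroup n k)[Omega n m | 'P^*])%g| = ((n - m)`! * (m - k)`! * k`!)%N.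
Proof.
rewrite young_subgroup_stab (card_young_subgroup (N := 4)); last first.
  by move=> x; rewrite /rowT; case: (x \in _); case: (n - k <= x).
rewrite !big_ord_recr big_ord0 /= mul1n.
(* The fibres of the refined labelling are [0, n-m), [n-m, n-k), empty and [n-k, n). *)
rewrite (@card_fiber_ord_itv _ _ 0 0 (n - m)) ?(@card_fiber_ord_itv _ _ 1 (n - m) (n - k))
  ?(@card_fiber_ord_itv _ _ 2 n n) ?(@card_fiber_ord_itv _ _ 3 (n - k) n); try lia.
- by rewrite subn0 subnn muln1 (_ : n - k - (n - m) = m - k) ?subKn //; lia.
all: move=> x; have := ltn_ord x; rewrite /rowT inE.
all: by case: (leqP (n - k) x); case: (leqP (n - m) x) => /= *; apply/idP/idP; lia.
Qed.

Lemma card_supsets_second_row :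
  #|[set Y : {set 'I_n} | second_row n k \subset Y & #|Y| == m]| = 'C(n - k, m - k).
Proof.
have := sum_supsets (fun _ => 1) (_ : #|second_row n k| <= m).
rewrite (card_second_row le_kn) => /(_ le_km); rewrite !sum1dep_card => ->.
by rewrite cards_draws (card_compl_second_row le_kn).
Qed.

Lemma orbit_rowgroup :
  orbit 'P^* (rowgroup n k) (Omega n m) =
  [set Y : {set 'I_n} | second_row n k \subset Y & #|Y| == m].
Proof.
apply/eqP; rewrite eqEcard card_supsets_second_row; apply/andP; split.
  apply/subsetP => _ /orbitP[p /young_subgroupP hp <-].
  rewrite inE setact_perm card_imset ?(card_Omega le_mn) ?eqxx ?andbT; last exact: perm_inj.
  apply/subsetP => s; rewrite inE => hs; rewrite -(permKV p s); apply: imset_f.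
  have := hp (p^-1 s)%g; rewrite permKV /rowT hs inE => /esym/eqP; rewrite eqb1.
  exact: leq_trans (leq_sub2l n le_km).
have := card_orbit_stab 'P^* (rowgroup n k) (Omega n m).
rewrite card_rowgroup_stab (card_rowgroup le_kn) -(@bin_fact (n - k) (m - k)); last lia.
rewrite (_ : n - k - (m - k) = n - m); last lia.
have pos : 0 < (n - m)`! * (m - k)`! * k`! by rewrite !muln_gt0 !fact_gt0.
by move=> e; rewrite leq_eqVlt -(eqn_pmul2r pos) e; apply/orP; left; apply/eqP; ring.
Qed.

Lemma sum_rowgroup (V : nmodType) (F : {set 'I_n} -> V) :
  (\sum_(p in rowgroup n k) F (p @: Omega n m) =
   (\sum_(X : {set 'I_n} | (X \subset ~: second_row n k) && (#|X| == (m - k)%N))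
      F (second_row n k :|: X)) *+ ((n - m)`! * (m - k)`! * k`!))%R.
Proof.
rewrite (sum_orbit 'P^* (Omega n m) F) ?subsetT // orbit_rowgroup card_rowgroup_stab big_set /=.
by rewrite sum_supsets (card_second_row le_kn).
Qed.

Lemma sum_meet_second_row (q : {perm 'I_n}) (V : nmodType) (F : nat -> V) :
  let W := (q^-1)%g @: Omega n m :\: second_row n k in
  (\sum_(X : {set 'I_n} | (X \subset ~: second_row n k) && (#|X| == (m - k)%N))
      F #|Omega n m :&: q @: (second_row n k :|: X)| =
   \sum_(t < (m - k).+1)
      F (m - #|W| + t)%N *+ ('C(#|W|, t) * 'C(n - k - #|W|, m - k - t))%N)%R.
Proof.
move=> W; have sWS : W \subset ~: second_row n k.
  by apply/subsetP => y; rewrite !inE => /andP[].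
rewrite (eq_bigr (fun X => F (m - #|W| + #|X :&: W|))); last first.
  by move=> X /andP[XS _]; rewrite card_setI_imset_perm ?disjoints_subset // (card_Omega le_mn).
rewrite (@sum_by_value _ _ (fun X => #|X :&: W|) (m - k).+1 _
  (fun t => F (m - #|W| + t)%N)); last first.
  by move=> X /andP[_ /eqP <-]; rewrite ltnS subset_leq_card // subsetIl.
apply: eq_bigr => t _; congr (_ *+ _)%R.
by rewrite card_draws_setI ?(card_compl_second_row le_kn) //; have := ltn_ord t; lia.
Qed.

End RowOrbit.

Section ColumnGroup.

Variables n k : nat.
Hypothesis le_kkn : k + k <= n.

Definition col_tops : {set 'I_n} := [set j : 'I_n | j < k].

Lemma card_col_tops : #|col_tops| = k.
Proof. by rewrite -[RHS]subn0 -(@card_ord_itv n 0 k) //; lia. Qed.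

(* The other cell of the column of [x] in T_k, or [x] itself in a one-cell column;
   the [insubd] default is only reached when [n < k + k]. *)
Definition col_mate (x : 'I_n) : 'I_n :=
  insubd x (if x < k then x + (n - k) else if n - k <= x then x - (n - k) else x).

Lemma val_col_mate x : col_mate x =
  (if x < k then x + (n - k) else if n - k <= x then x - (n - k) else x) :> nat.
Proof.
rewrite val_insubd; have := ltn_ord x.
case: (ltnP x k) => xk /=; [|case: (leqP (n - k) x) => xnk /=].
all: by move=> xn; rewrite ifT //; lia.
Qed.

Lemma col_mateK : involutive col_mate.
Proof.
move=> x; apply: val_inj => /=; rewrite !val_col_mate.
case: (ltnP x k) => xk /=; [|case: (leqP (n - k) x) => xnk /=].
all: by have := ltn_ord x; (repeat case: ifP); lia.
Qed.

Lemma colT_col_mate x : colT n k (col_mate x) = colT n k x.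
Proof.
rewrite /colT val_col_mate; have := ltn_ord x.
by case: (ltnP x k) => xk /=; [|case: (leqP (n - k) x) => xnk /=]; (repeat case: ifP); lia.
Qed.

Lemma colT_inj_mate x y : colT n k y = colT n k x -> y = x \/ y = col_mate x.
Proof.
move=> e; have [-> | ne_yx] := eqVneq y x; [by left | right; apply: val_inj].
move: e ne_yx; rewrite -val_eqE /colT /= val_col_mate; have := ltn_ord x; have := ltn_ord y.
by (repeat case: ifP); lia.
Qed.

Lemma col_mate_top j : j \in col_tops -> (col_mate j \notin col_tops) && (col_mate j != j).
Proof. by rewrite !inE -val_eqE /= val_col_mate => jk; rewrite jk; lia. Qed.

Lemma col_mate_fixed x :
  x \notin col_tops -> col_mate x \notin col_tops -> col_mate x = x.
Proof.
rewrite !inE => xk; apply: contraNeq; rewrite -val_eqE /= val_col_mate.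
by have := ltn_ord x; (repeat case: ifP); lia.
Qed.

Definition col_flip (J : {set 'I_n}) x :=
  if (x \in J) || (col_mate x \in J) then col_mate x else x.

Lemma col_flipK J : involutive (col_flip J).
Proof.
move=> x; rewrite {2}/col_flip; case: ifP => hx; last by rewrite /col_flip hx.
by rewrite /col_flip (col_mateK x) orbC hx.
Qed.

Definition col_swap J : {perm 'I_n} := perm (can_inj (col_flipK J)).

Lemma col_swapE J x : col_swap J x = col_flip J x.
Proof. by rewrite permE. Qed.

Lemma col_swap_colgroup J : col_swap J \in colgroup n k.
Proof.
rewrite inE; apply/forallP => x; rewrite col_swapE /col_flip.
by case: ifP => _; rewrite ?colT_col_mate.
Qed.

Lemma colgroup_col_swap q :
  q \in colgroup n k -> q = col_swap [set j in col_tops | q j != j].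
Proof.
rewrite inE => /forallP cq; have qx x := colT_inj_mate (eqP (cq x)).
apply/permP => x; rewrite col_swapE /col_flip !in_set.
case: (qx x) => [qxx | qxm].
  rewrite qxx eqxx andbF /=; case: ifP => // /andP[_ hm].
  case: (qx (col_mate x)) => e; first by rewrite e eqxx in hm.
  by apply/esym/(@perm_inj _ q); rewrite qxx e col_mateK.
have [mx|mx] := eqVneq (col_mate x) x; first by rewrite qxm mx; case: ifP.
rewrite qxm ifT //; have [_|xt] := boolP (x < k); first by rewrite /= mx.
have [mt|mt] := boolP (col_mate x < k); last first.
  by rewrite (@col_mate_fixed x) ?inE ?eqxx in mx.
apply: contraNneq mx => e.
by apply/eqP/(@perm_inj _ q); rewrite e qxm.
Qed.

Lemma col_swap_top (J : {set 'I_n}) j : J \subset col_tops -> j \in col_tops ->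
  (col_swap J j != j) = (j \in J).
Proof.
move=> sJ jt; have /andP[mt mj] := col_mate_top jt.
rewrite col_swapE /col_flip (_ : (col_mate j \in J) = false) ?orbF; last first.
  by apply: contraNF mt => /(subsetP sJ).
by case: (j \in J); rewrite ?eqxx.
Qed.

Lemma colgroupE : colgroup n k = col_swap @: powerset col_tops.
Proof.
apply/setP => q; apply/idP/imsetP => [qC|[J _ ->]]; last exact: col_swap_colgroup.
exists [set j in col_tops | q j != j]; last exact: colgroup_col_swap.
by rewrite powersetE; apply/subsetP => j; rewrite inE => /andP[].
Qed.

Lemma col_swap_inj : {in powerset col_tops &, injective col_swap}.
Proof.
move=> J J'; rewrite !powersetE => sJ sJ' e; apply/setP => j.
have [jt|jt] := boolP (j \in col_tops).
  by rewrite -(col_swap_top sJ jt) -(col_swap_top sJ' jt) e.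
by rewrite (contraNF (subsetP sJ j) jt) (contraNF (subsetP sJ' j) jt).
Qed.

Lemma col_swapD1 (J : {set 'I_n}) j : J \subset col_tops -> j \in J ->
  col_swap J = (col_swap (J :\ j) * tperm j (col_mate j))%g.
Proof.
move=> sJ jJ; have /andP[mt mj] := col_mate_top (subsetP sJ j jJ).
have mJ : col_mate j \notin J by apply: contra mt => /(subsetP sJ).
apply/permP => x; rewrite permM !col_swapE /col_flip !in_setD1.
have [->|xj] := eqVneq x j.
  by rewrite ?eqxx jJ (negbTE mJ) (negbTE mj) /= tpermL.
have [->|xmj] := eqVneq x (col_mate j).
  by rewrite col_mateK jJ orbT (negbTE mJ) eqxx andbF tpermR.
have mxj : col_mate x != j by apply: contra xmj => /eqP <-; rewrite col_mateK.
have mxmj : col_mate x != col_mate j.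
  by apply: contra xj => /eqP/(can_inj col_mateK) ->.
by rewrite (negbTE mxj) /=; case: ifP => _; rewrite tpermD // eq_sym.
Qed.

Lemma odd_col_swap (J : {set 'I_n}) :
  J \subset col_tops -> odd_perm (col_swap J) = odd #|J|.
Proof.
move=> sJ; move cJ : #|J| => c; elim: c J sJ cJ => [|c IHc] J sJ cJ.
  have -> : col_swap J = 1%g.
    by apply/permP => x; rewrite col_swapE perm1 /col_flip (cards0_eq cJ) !inE.
  by rewrite odd_perm1.
have [j jJ] : {j | j \in J} by apply/sigW/set0Pn; rewrite -card_gt0 cJ.
rewrite (col_swapD1 sJ jJ) odd_permM IHc; last 2 first.
- exact: subset_trans (subD1set J j) sJ.
- by move: cJ; rewrite (cardsD1 j) jJ => -[].
by have /andP[_ mj] := col_mate_top (subsetP sJ j jJ); rewrite odd_tperm eq_sym mj addbT.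
Qed.

Lemma sum_colgroup (R : ringType) (F : {perm 'I_n} -> R) :
  (\sum_(q in colgroup n k) (-1) ^+ odd_perm q * F q =
   \sum_(J in powerset col_tops) (-1) ^+ #|J| * F (col_swap J))%R.
Proof.
rewrite colgroupE big_imset /=; last exact: col_swap_inj.
by apply: eq_bigr => J; rewrite powersetE => sJ; rewrite odd_col_swap // signr_odd.
Qed.

Lemma card_col_swap_preimage m (J : {set 'I_n}) :
  k <= m -> m + k <= n -> J \subset col_tops ->
  #|((col_swap J)^-1)%g @: Omega n m :\: second_row n k| = m - k + #|J|.
Proof.
move=> le_km le_mkn sJ.
have -> : ((col_swap J)^-1)%g @: Omega n m :\: second_row n k =
          J :|: [set y : 'I_n | n - m <= y < n - k].
  apply/setP => y; rewrite in_setD -{2}(permK (col_swap J) y) mem_imset; last first.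
    exact: perm_inj.
  rewrite !inE col_swapE /col_flip; have := ltn_ord y.
  have [yJ _|yJ] := boolP (y \in J).
    by have := subsetP sJ y yJ; rewrite inE val_col_mate => yk; rewrite yk; lia.
  have [mJ|mJ] := boolP (col_mate y \in J); last by rewrite /= andbC -ltnNge.
  by have := subsetP sJ _ mJ; rewrite inE val_col_mate /=; (repeat case: ifP); lia.
rewrite cardsU_disjoint ?card_ord_itv; first lia.
  by apply/andP; split; lia.
rewrite disjoints_subset; apply/subsetP => y /(subsetP sJ).
by rewrite !inE; lia.
Qed.

End ColumnGroup.

Local Open Scope ring_scope.

Lemma coef_Bmat_piM n m (b : nat -> algC) (a : groupring n) sigma : (m <= n)%N ->
  Bmat n m b (piM n m a) sigma =
  \sum_(g : {perm 'I_n}) a g * b #|sigma :&: g @: Omega n m|.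
Proof.
move=> le_mn; rewrite /Bmat /piM.
under eq_bigr => tau _ do rewrite mulr_sumr.
rewrite exchange_big /=; apply: eq_bigr => g _.
have cg : #|g @: Omega n m| == m by rewrite card_imset ?card_Omega //; apply: perm_inj.
rewrite (bigD1 (g @: Omega n m)) //= eqxx mulr1 mulrC big1 ?addr0 //.
by move=> tau /andP[_ /negbTE]; rewrite eq_sym => ->; rewrite !mulr0.
Qed.

Lemma sum_young_c n k (G : {perm 'I_n} -> algC) :
  \sum_g young_c n k g * G g =
  \sum_(q in colgroup n k) \sum_(p in rowgroup n k) (-1) ^+ odd_perm q * G (p * q)%g.
Proof.
rewrite /young_c; under eq_bigr => g _ do rewrite mulr_suml.
rewrite exchange_big /=; apply: eq_bigr => q _.
under eq_bigr => g _ do rewrite mulr_suml.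
rewrite exchange_big /=; apply: eq_bigr => p _.
rewrite (bigD1 (p * q)%g) //= eqxx mulr1 big1 ?addr0 //.
by move=> g /negbTE ->; rewrite mulr0 mul0r.
Qed.

Lemma coef_B_pi_young n m k (b : nat -> algC) (le_kkn : (k + k <= n)%N) :
  (k <= m)%N -> (m <= n)%N ->
  Bmat n m b (piM n m (young_c n k)) (Omega n m) =
  \sum_(J in powerset (col_tops n k)) (-1) ^+ #|J| *
    (\sum_(X : {set 'I_n} | (X \subset ~: second_row n k) && (#|X| == (m - k)%N))
       b #|Omega n m :&: col_swap le_kkn J @: (second_row n k :|: X)|)
    *+ ((n - m)`! * (m - k)`! * k`!).
Proof.
move=> le_km le_mn; rewrite coef_Bmat_piM // sum_young_c.
under eq_bigr => q _ do rewrite -mulr_sumr.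
rewrite sum_colgroup; apply: eq_bigr => J _; rewrite -mulrnAr; congr (_ * _).
under eq_bigr => p _ do rewrite imset_permM.
exact: (sum_rowgroup le_km le_mn (fun Y => b #|Omega n m :&: col_swap le_kkn J @: Y|)).
Qed.

Lemma sum_col_swap_meet n m k (le_kkn : (k + k <= n)%N) (J : {set 'I_n})
    (V : nmodType) (F : nat -> V) :
  (k <= m)%N -> (m + m <= n)%N -> J \subset col_tops n k ->
  \sum_(X : {set 'I_n} | (X \subset ~: second_row n k) && (#|X| == (m - k)%N))
     F #|Omega n m :&: col_swap le_kkn J @: (second_row n k :|: X)| =
  \sum_(t < (m - k).+1)
     F (k - #|J| + t)%N *+ ('C(m - k + #|J|, t) * 'C(n - m - #|J|, m - k - t)).
Proof.
move=> le_km le_mmn sJ; have := subset_leq_card sJ; rewrite (card_col_tops le_kkn) => le_Jk.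
rewrite (sum_meet_second_row le_km) ?(card_col_swap_preimage le_kkn le_km _ sJ); try lia.
by apply: eq_bigr => t _; congr (F _ *+ ('C(_, _) * 'C(_, _)))%N; lia.
Qed.

Lemma sum_col_swap_meet_reindex n m k v (b : nat -> algC) : (v <= k <= m)%N ->
  ((-1) ^+ v * (\sum_(t < (m - k).+1)
     b (k - v + t)%N *+ ('C(m - k + v, t) * 'C(n - m - v, m - k - t)))
     *+ ((n - m)`! * (m - k)`! * k`!)) *+ 'C(k, v) =
  \sum_(0 <= w < (m - k).+1)
    (-1) ^+ v * ('C(k, v) * 'C(m - k, w) * 'C(n - m - v, w) * w`!
      * 'C(m - k + v, m - k - w) * (m - k - w)`! * k`! * (n - m)`!)%:R
      * b (m - v - w)%N.
Proof.
case/andP=> le_vk le_km.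
rewrite -mulrnA -mulrnAr -sumrMnl mulr_sumr big_mkord (reindex_inj rev_ord_inj) /=.
apply: eq_bigr => w _; have le_w : (w <= m - k)%N by rewrite -ltnS.
rewrite subSS (_ : k - v + (m - k - w) = m - v - w)%N; last lia.
rewrite (_ : m - k - (m - k - w) = w)%N; last lia.
rewrite -!mulrnA -[in LHS]mulr_natr [RHS]mulrAC -mulrA; congr (_ * (_ * _%:R)).
by rewrite -(bin_fact le_w); ring.
Qed.

Theorem lemma6 (n m k : nat) (b : nat -> algC) :
  (0 < n)%N -> (m <= n./2)%N -> (k <= m)%N ->
  Bmat n m b (piM n m (young_c n k)) (Omega n m) =
  \sum_(0 <= v < k.+1) \sum_(0 <= w < (m - k).+1)
    (-1) ^+ v * ('C(k, v) * 'C(m - k, w) * 'C(n - m - v, w) * w`!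
      * 'C(m - k + v, m - k - w) * (m - k - w)`! * k`! * (n - m)`!)%:R
      * b (m - v - w)%N.
Proof.
move=> _ le_m_half le_km.
have le_mmn : (m + m <= n)%N by rewrite addnn -geq_half_double.
have [le_mn le_kkn] : (m <= n)%N /\ (k + k <= n)%N by split; lia.
pose G v := ((-1) ^+ v * \sum_(t < (m - k).+1)
  b (k - v + t)%N *+ ('C(m - k + v, t) * 'C(n - m - v, m - k - t)))
  *+ ((n - m)`! * (m - k)`! * k`!).
rewrite (coef_B_pi_young b le_kkn le_km le_mn) (eq_bigr (fun J : {set 'I_n} => G #|J|)); last first.
  by move=> J; rewrite powersetE => sJ; rewrite (sum_col_swap_meet _ _ le_km le_mmn sJ).
rewrite (sum_by_value (N := k.+1)); last first.
  move=> J; rewrite powersetE ltnS -{2}(card_col_tops le_kkn).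
  exact: subset_leq_card.
rewrite big_mkord; apply: eq_bigr => v _.
rewrite (_ : #|_| = 'C(k, v)); last first.
  rewrite -[X in 'C(X, _)](card_col_tops le_kkn) -cards_draws.
  by apply: eq_card => J; rewrite !inE.
by apply: sum_col_swap_meet_reindex; rewrite le_km -ltnS ltn_ord.
Qed.
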